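(* Let $n\ge2$, $d\ge1$ with $\gcd(n,d)=1$, and let $\ell,\ell'\in\mathrm{Dyck}_{d,n}$. Then for every $2\le i\le n+d$ the relation $\bar\ell\,R\,r^i(\bar{\ell'})$ does not hold (in $L_{d+1,n}$).
   Context: $L_{a,b}$ is the set of lattice paths from $(0,0)$ to $(a,b)$ made of unit horizontal $(1,0)$ and vertical $(0,1)$ steps. $\mathrm{Dyck}_{d,n}$ is the set of $\ell\in L_{d,n}$ all of whose lattice points $(x,y)$ satisfy $y\le\frac nd x$. For $\ell\in L_{d,n}$, $\bar\ell\in L_{d+1,n}$ is obtained by adding a horizontal step at the beginning. For $p\in L_{d+1,n}$, $r(p)$ is obtained by moving the first step of $p$ to the end. For $p_1,p_2\in L_{d+1,n}$: $p_1\le p_2$ means $p_1$ lies weakly below $p_2$; $Y_p$ is the region of the $(d+1)\times n$ rectangle between $p$ and the right and bottom sides; $p_1\,R\,p_2$ iff $p_1\le p_2$ and no lattice-aligned rectangle of width $2$ and height $1$ fits inside $Y_{p_2}\setminus Y_{p_1}$. *)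

From mathcomp Require Import all_boot.
Set Implicit Arguments. Unset Strict Implicit. Unset Printing Implicit Defensive.

(* A lattice path is a sequence of unit steps:
   false = horizontal step (1,0), true = vertical step (0,1). *)
Definition hstep : bool := false.
Definition vstep : bool := true.

Definition is_lpath (a b : nat) (p : seq bool) : bool :=
  (count_mem hstep p == a) && (count_mem vstep p == b).

Definition lpoint (p : seq bool) (k : nat) : nat * nat :=
  (count_mem hstep (take k p), count_mem vstep (take k p)).

(* Dyck_{d,n}: paths in L_{d,n} all of whose lattice points (x,y) satisfy
   y <= (n/d) x, i.e. y * d <= n * x. *)
Definition is_dyck (d n : nat) (p : seq bool) : Prop :=
  is_lpath d n p /\
  forall k, k <= size p -> (lpoint p k).2 * d <= n * (lpoint p k).1.

Definition lbar (p : seq bool) : seq bool := hstep :: p.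

Definition rstep (p : seq bool) : seq bool :=
  match p with [::] => [::] | s :: q => rcons q s end.

(* hgt p x = y-coordinate of the horizontal step of p from abscissa x to x+1
   (the number of vertical steps preceding the (x+1)-th horizontal step). *)
Fixpoint hgt (p : seq bool) (x : nat) : nat :=
  match p with
  | [::] => 0
  | s :: q => if s then (hgt q x).+1
              else if x is x'.+1 then hgt q x' else 0
  end.

(* Y_p (inside the a x b rectangle): the set of unit cells [x,x+1]x[y,y+1]
   lying between p and the right and bottom sides of the rectangle. *)
Definition Yreg (a b : nat) (p : seq bool) (x y : nat) : bool :=
  [&& x < a, y < b & y < hgt p x].

(* p1 <= p2 : p1 lies weakly below p2 (region below p1 contained in region
   below p2). *)
Definition path_le (a b : nat) (p1 p2 : seq bool) : Prop :=
  forall x y, Yreg a b p1 x y -> Yreg a b p2 x y.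

(* p1 R p2 : p1 <= p2 and no lattice-aligned rectangle of width 2 and
   height 1 fits inside Y_{p2} \ Y_{p1}. *)
Definition relR (a b : nat) (p1 p2 : seq bool) : Prop :=
  path_le a b p1 p2 /\
  ~ (exists x y,
       [&& Yreg a b p2 x y, ~~ Yreg a b p1 x y,
           Yreg a b p2 x.+1 y & ~~ Yreg a b p1 x.+1 y]).

From mathcomp Require Import all_boot zify.

(* Let (x', y') be the lattice point of l' reached after i - 1 steps.  Since
   n and d are coprime, this interior point lies strictly below the diagonal:
   y' d < n x'.  The path r^i(lbar l') starts with the remaining part of l',
   which has d - x' horizontal and n - y' vertical steps, so it lies at height
   at least n - y' on the columns d - x' and d - x' + 1.  On the same columns
   lbar l stays below height n - y', because l lies below the diagonal.  Hence
   the 2 x 1 rectangle with lower-left corner (d - x', n - y' - 1) fits in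
   Y_{r^i(lbar l')} \ Y_{lbar l}. *)

Lemma rstep_rot1 (p : seq bool) : rstep p = rot 1 p.
Proof. by case: p => [|s p] //=; rewrite rot1_cons. Qed.

Lemma iter_rstep i (p : seq bool) : i <= size p -> iter i rstep p = rot i p.
Proof.
elim: i => [|i IH] le_ip /=; first by rewrite rot0.
by rewrite IH ?rstep_rot1 -?rotS //; lia.
Qed.

Lemma count_drop T (a : pred T) k (s : seq T) :
  count a (drop k s) = count a s - count a (take k s).
Proof. by rewrite -{2}(cat_take_drop k s) count_cat addKn. Qed.

Lemma count_take_le T (a : pred T) k (s : seq T) :
  count a (take k s) <= count a s.
Proof. by rewrite -{2}(cat_take_drop k s) count_cat leq_addr. Qed.

Lemma count_mem_bool (p : seq bool) :
  count_mem true p + count_mem false p = size p.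
Proof.
rewrite -(count_predC (pred1 true)); congr (_ + _).
by apply: eq_count => -[].
Qed.

Lemma hgt_cat (S P : seq bool) x : count_mem false S <= x ->
  hgt (S ++ P) x = count_mem true S + hgt P (x - count_mem false S).
Proof.
elim: S x => [|[] S IH] x /=; first by rewrite subn0.
  by move=> le_Sx; rewrite IH.
case: x => [|x] //; rewrite add1n ltnS => le_Sx.
by rewrite IH.
Qed.

Lemma hgt_rot_ge k (s : seq bool) x : count_mem false (drop k s) <= x ->
  count_mem true (drop k s) <= hgt (rot k s) x.
Proof. by move=> le_x; rewrite /rot hgt_cat ?leq_addr. Qed.

Lemma lpoint_hgt (p : seq bool) x : x < count_mem false p ->
  exists2 k, k <= size p & lpoint p k = (x, hgt p x).
Proof.
rewrite /lpoint /hstep /vstep; elim: p x => [|[] p IH] x //= lt_xp.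
  by have [k le_kp [pt_h pt_v]] := IH x lt_xp; exists k.+1; rewrite //= pt_h pt_v.
case: x lt_xp => [|x] lt_xp; first by exists 0.
by have [k le_kp [pt_h pt_v]] := IH x lt_xp; exists k.+1; rewrite //= pt_h pt_v.
Qed.

Lemma dyck_hgt_le d n (l : seq bool) x : is_dyck d n l -> x < d ->
  hgt l x * d <= n * x.
Proof.
move=> [/andP[/eqP count_h _] below] lt_xd.
have [k le_kl pt_k] := @lpoint_hgt l x ltac:(by rewrite count_h).
by have := below k le_kl; rewrite pt_k.
Qed.

(* Equality y d = n x forces n | y by coprimality, i.e. (x, y) is an endpoint. *)
Lemma dyck_interior_lt d n (l : seq bool) k :
  0 < n -> coprime n d -> is_dyck d n l -> 0 < k < size l ->
  (lpoint l k).2 * d < n * (lpoint l k).1.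
Proof.
move=> n_gt0 co [/andP[/eqP count_h /eqP count_v] below] /andP[k_gt0 lt_kl].
have size_l : size l = n + d by rewrite -count_mem_bool count_h count_v.
rewrite /lpoint /=.
set x := count_mem false (take k l); set y := count_mem true (take k l).
have xy_k : y + x = k by rewrite count_mem_bool size_take lt_kl.
have le_xd : x <= d by rewrite -count_h count_take_le.
have le_yn : y <= n by rewrite -count_v count_take_le.
rewrite ltn_neqAle (below k (ltnW lt_kl)) andbT; apply/eqP => diag.
have n_dvd_y : n %| y by rewrite -(Gauss_dvdl y co) diag dvdn_mulr.
have [y0|y_gt0] := posnP y.
  by move: diag; rewrite y0 mul0n => /esym/eqP; rewrite muln_eq0; lia.
have y_n : y = n by have := dvdn_leq y_gt0 n_dvd_y; lia.
move: diag; rewrite y_n => /eqP; rewrite eqn_pmul2l // => /eqP; lia.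
Qed.

Lemma hgt_lbar_lt d n (l : seq bool) x' y' x :
  is_dyck d n l -> x' <= d -> y' * d < n * x' -> x <= (d - x').+1 ->
  hgt (lbar l) x < n - y'.
Proof.
move=> dl le_x'd below le_x.
have lt_y'n : y' < n by nia.
case: x le_x => [|x] /= le_x; first by rewrite subn_gt0.
have := @dyck_hgt_le d n l x dl ltac:(nia); nia.
Qed.

Theorem proposition4p18 (n d : nat) :
  2 <= n -> 1 <= d -> coprime n d ->
  forall l l' : seq bool, is_dyck d n l -> is_dyck d n l' ->
  forall i, 2 <= i <= n + d ->
  ~ relR d.+1 n (lbar l) (iter i rstep (lbar l')).
Proof.
move=> n_ge2 _ co l l' dl dl' i /andP[i_ge2 le_i] [_]; apply.
have [/andP[/eqP count_h /eqP count_v] _] := dl'.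
have size_l' : size l' = n + d by rewrite -count_mem_bool count_h count_v.
have := @dyck_interior_lt d n l' i.-1 ltac:(lia) co dl' ltac:(lia).
rewrite /lpoint /=.
set x' := count_mem false (take i.-1 l'); set y' := count_mem true (take i.-1 l').
move=> below.
have le_x'd : x' <= d by rewrite -count_h count_take_le.
have rot_l' : iter i rstep (lbar l') = rot i.-1.+1 (lbar l').
  by rewrite (prednK (ltnW i_ge2)) iter_rstep //= size_l'; lia.
have tail_h : count_mem false (drop i.-1.+1 (lbar l')) = d - x'
  by rewrite /= count_drop count_h.
have tail_v : count_mem true (drop i.-1.+1 (lbar l')) = n - y'
  by rewrite /= count_drop count_v.
have rot_hi x : d - x' <= x -> n - y' <= hgt (rot i.-1.+1 (lbar l')) x.
  by rewrite -tail_h -tail_v; apply: hgt_rot_ge.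
have lbar_lo x : x <= (d - x').+1 -> hgt (lbar l) x < n - y'.
  exact: hgt_lbar_lt.
exists (d - x'), (n - y').-1; rewrite rot_l' /Yreg.
have := rot_hi (d - x') (leqnn _); have := rot_hi (d - x').+1 (leqnSn _).
have := lbar_lo (d - x') (leqnSn _); have := lbar_lo (d - x').+1 (leqnn _).
nia.
Qed.
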